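(* Let $U$ be a disjunctive uninorm with neutral element $e\in\,]0,1[$, let $x\in[0,1]$ with $x<e$ be such that $U(x,\cdot)$ is continuous with range $[0,1]$, and let $a_x=\lim_{n\to+\infty}x_U^{(n)}$, $d_x=\lim_{n\to+\infty}x_U^{(-n)}$. If $U(x,t)=t$ for all $t\in[0,a_x]\cup[d_x,1]$, then $U$ is an ordinal sum of semigroups defined on $]a_x,d_x[$ and on $[0,a_x]\cup[d_x,1]$; namely, both $]a_x,d_x[$ and $[0,a_x]\cup[d_x,1]$ are closed under $U$, and $U(s,t)=t$ for all $s\in\,]a_x,d_x[$ and $t\in[0,a_x]\cup[d_x,1]$.
   Context: A uninorm is a map $U:[0,1]^2\to[0,1]$ that is commutative, associative, non-decreasing in each variable, and has a neutral element $e\in[0,1]$; it is disjunctive if $U(1,0)=1$. Under the hypotheses there is a unique $y\in[0,1]$ with $U(x,y)=e$ (and $y>e$). Define $x_U^{(0)}=e$, $x_U^{(n)}=U(x,x_U^{(n-1)})$ for $n\in\mathbb{N}$, and $x_U^{(-n)}=y_U^{(n)}$ where $y_U^{(0)}=e$, $y_U^{(n)}=U(y,y_U^{(n-1)})$; the sequence $(x_U^{(n)})_{n\ge0}$ is non-increasing and $(x_U^{(-n)})_{n\ge0}$ is non-decreasing, so the limits exist. *)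

From Stdlib Require Import Reals.
From Coquelicot Require Import Coquelicot.
Open Scope R_scope.

Definition inI (t : R) : Prop := 0 <= t <= 1.

(* U : R -> R -> R is a uninorm on [0,1] with neutral element e
   (only its values on [0,1]^2 matter). *)
Definition is_uninorm (U : R -> R -> R) (e : R) : Prop :=
  inI e /\
  (forall s t, inI s -> inI t -> inI (U s t)) /\
  (forall s t, inI s -> inI t -> U s t = U t s) /\
  (forall s t u, inI s -> inI t -> inI u -> U s (U t u) = U (U s t) u) /\
  (forall s1 s2 t, inI s1 -> inI s2 -> inI t -> s1 <= s2 -> U s1 t <= U s2 t) /\
  (forall t, inI t -> U e t = t).

Definition disjunctive (U : R -> R -> R) : Prop := U 1 0 = 1.

Fixpoint upow (U : R -> R -> R) (e x : R) (n : nat) : R :=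
  match n with
  | O => e
  | S m => U x (upow U e x m)
  end.

Definition cont_on_I (f : R -> R) : Prop :=
  forall t, inI t -> filterlim f (within inI (locally t)) (locally (f t)).

From Stdlib Require Import Reals Lra.
From Coquelicot Require Import Coquelicot.
Open Scope R_scope.

(* A fixed point [t] of [U x] is also fixed by the inverse [y] of [x]
   ([U y t = U y (U x t) = U e t]), hence by every power [x^(n)] and [y^(m)].
   Any [s] in ]a, d[ lies between some [x^(n)] and some [y^(m)], so
   monotonicity squeezes [U s t] to [t].  A product of points of ]a, d[ that
   fell outside would be such a fixed point, and multiplying it by a power of
   [y] (or [x]) contradicts [U x^(n) y^(n) = e].  A product of outer points is
   again fixed by [x], and a fixed point below (above) [e] is bounded by every
   [x^(n)] (every [y^(n)]), hence by the limit [a] ([d]). *)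

Lemma is_lim_seq_ex_lt (u : nat -> R) (l s : R) :
  is_lim_seq u l -> l < s -> exists n, u n < s.
Proof.
  intros Hu hls. apply is_lim_seq_Reals in Hu.
  destruct (Hu (s - l)) as [N HN]; [lra|].
  exists N. specialize (HN N (le_n N)). unfold Rdist in HN.
  apply Rabs_lt_between in HN. lra.
Qed.

Lemma is_lim_seq_ex_gt (u : nat -> R) (l s : R) :
  is_lim_seq u l -> s < l -> exists n, s < u n.
Proof.
  intros Hu hsl. apply is_lim_seq_Reals in Hu.
  destruct (Hu (l - s)) as [N HN]; [lra|].
  exists N. specialize (HN N (le_n N)). unfold Rdist in HN.
  apply Rabs_lt_between in HN. lra.
Qed.

Lemma is_lim_seq_ge_lb (u : nat -> R) (l c : R) :
  is_lim_seq u l -> (forall n, c <= u n) -> c <= l.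
Proof.
  intros Hu Hc.
  exact (is_lim_seq_le (fun _ => c) u c l Hc (is_lim_seq_const c) Hu).
Qed.

Lemma is_lim_seq_le_ub (u : nat -> R) (l c : R) :
  is_lim_seq u l -> (forall n, u n <= c) -> l <= c.
Proof.
  intros Hu Hc.
  exact (is_lim_seq_le u (fun _ => c) l c Hc Hu (is_lim_seq_const c)).
Qed.

Section Uninorm.

Variables (U : R -> R -> R) (e : R).
Hypothesis HU : is_uninorm U e.

Lemma uninorm_neutral_in_I : inI e.
Proof. apply HU. Qed.

Lemma uninorm_closed s t : inI s -> inI t -> inI (U s t).
Proof. apply HU. Qed.

Lemma uninorm_comm s t : inI s -> inI t -> U s t = U t s.
Proof. apply HU. Qed.

Lemma uninorm_assoc s t u :
  inI s -> inI t -> inI u -> U s (U t u) = U (U s t) u.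
Proof. apply HU. Qed.

Lemma uninorm_monotone_l s1 s2 t :
  inI s1 -> inI s2 -> inI t -> s1 <= s2 -> U s1 t <= U s2 t.
Proof. apply HU. Qed.

Lemma uninorm_monotone_r t s1 s2 :
  inI t -> inI s1 -> inI s2 -> s1 <= s2 -> U t s1 <= U t s2.
Proof.
  intros ht h1 h2 h12.
  rewrite (uninorm_comm t s1), (uninorm_comm t s2) by assumption.
  now apply uninorm_monotone_l.
Qed.

Lemma uninorm_neutral_l t : inI t -> U e t = t.
Proof. apply HU. Qed.

Lemma uninorm_neutral_r t : inI t -> U t e = t.
Proof.
  intros ht. rewrite uninorm_comm by auto using uninorm_neutral_in_I.
  now apply uninorm_neutral_l.
Qed.

Lemma uninorm_inverse_fixpoint x y t :
  inI x -> inI y -> inI t -> U x y = e -> U x t = t -> U y t = t.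
Proof.
  intros hx hy ht hxy hxt.
  rewrite <- hxt at 1. rewrite uninorm_assoc, (uninorm_comm y x), hxy by assumption.
  now apply uninorm_neutral_l.
Qed.

Lemma upow_in_I x n : inI x -> inI (upow U e x n).
Proof.
  intros hx. induction n as [|n IH]; simpl.
  - apply uninorm_neutral_in_I.
  - now apply uninorm_closed.
Qed.

Lemma upow_inverse x y n :
  inI x -> inI y -> U x y = e -> U (upow U e x n) (upow U e y n) = e.
Proof.
  intros hx hy hxy. induction n as [|n IH]; simpl.
  - apply uninorm_neutral_l, uninorm_neutral_in_I.
  - pose proof (upow_in_I x n hx) as hxn. pose proof (upow_in_I y n hy) as hyn.
    (* Rearrange [(x x^(n)) (y y^(n))] into [(x y) (x^(n) y^(n))]. *)
    rewrite <- uninorm_assoc, (uninorm_assoc (upow U e x n) y), (uninorm_comm _ y),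
      <- (uninorm_assoc y), IH, uninorm_assoc, hxy
      by auto using uninorm_closed, uninorm_neutral_in_I.
    apply uninorm_neutral_l, uninorm_neutral_in_I.
Qed.

Lemma upow_fixpoint x t n :
  inI x -> inI t -> U x t = t -> U (upow U e x n) t = t.
Proof.
  intros hx ht hxt. induction n as [|n IH]; simpl.
  - now apply uninorm_neutral_l.
  - rewrite <- uninorm_assoc by auto using upow_in_I. now rewrite IH.
Qed.

Lemma fixpoint_le_upow x w n :
  inI x -> inI w -> U x w = w -> w <= e -> w <= upow U e x n.
Proof.
  intros hx hw hxw hwe. induction n as [|n IH]; simpl; [exact hwe|].
  rewrite <- hxw. apply uninorm_monotone_r; auto using upow_in_I.
Qed.

Lemma upow_le_fixpoint x w n :
  inI x -> inI w -> U x w = w -> e <= w -> upow U e x n <= w.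
Proof.
  intros hx hw hxw hew. induction n as [|n IH]; simpl; [exact hew|].
  rewrite <- hxw. apply uninorm_monotone_r; auto using upow_in_I.
Qed.

Section OrdinalSum.

Variables (x y a d : R).
Hypotheses (hx : inI x) (hy : inI y) (hxy : U x y = e).
Hypotheses (Ha : is_lim_seq (upow U e x) a) (Hd : is_lim_seq (upow U e y) d).
Hypothesis Hfix : forall t, inI t -> (t <= a \/ d <= t) -> U x t = t.

Lemma between_lims_in_I s : a < s < d -> inI s.
Proof.
  intros hs.
  assert (ha0 : 0 <= a)
    by (apply (is_lim_seq_ge_lb _ _ _ Ha); intros n; apply (upow_in_I x n hx)).
  assert (hd1 : d <= 1)
    by (apply (is_lim_seq_le_ub _ _ _ Hd); intros n; apply (upow_in_I y n hy)).
  unfold inI. lra.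
Qed.

Lemma outer_fixpoint_inverse t : inI t -> (t <= a \/ d <= t) -> U y t = t.
Proof.
  intros ht hto. apply (uninorm_inverse_fixpoint x); auto.
Qed.

Lemma between_lims_acts_trivially s t :
  a < s < d -> inI t -> (t <= a \/ d <= t) -> U s t = t.
Proof.
  intros hs ht hto. pose proof (between_lims_in_I s hs) as hsI.
  destruct (is_lim_seq_ex_lt _ _ _ Ha (proj1 hs)) as [n hn].
  destruct (is_lim_seq_ex_gt _ _ _ Hd (proj2 hs)) as [m hm].
  pose proof (upow_fixpoint x t n hx ht (Hfix t ht hto)) as hxn_t.
  pose proof (upow_fixpoint y t m hy ht (outer_fixpoint_inverse t ht hto)) as hym_t.
  assert (hlow : U (upow U e x n) t <= U s t)
    by (apply uninorm_monotone_l; auto using upow_in_I; lra).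
  assert (hhigh : U s t <= U (upow U e y m) t)
    by (apply uninorm_monotone_l; auto using upow_in_I; lra).
  lra.
Qed.

(* If [U s t <= a], it is fixed by [y^(m)] with [x^(m) < t]; but
   [U t y^(m) >= U x^(m) y^(m) = e], so [U (U s t) y^(m) >= U s e = s > a]. *)
Lemma between_lims_mul_gt s t : a < s < d -> a < t < d -> a < U s t.
Proof.
  intros hs ht. pose proof (between_lims_in_I s hs) as hsI.
  pose proof (between_lims_in_I t ht) as htI.
  pose proof (uninorm_closed s t hsI htI) as hw.
  destruct (Rle_lt_dec (U s t) a) as [hwa|]; [exfalso|assumption].
  destruct (is_lim_seq_ex_lt _ _ _ Ha (proj1 ht)) as [m hm].
  pose proof (upow_in_I x m hx) as hxm. pose proof (upow_in_I y m hy) as hym.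
  assert (he_le : e <= U t (upow U e y m)).
  { apply Rle_trans with (U (upow U e x m) (upow U e y m)).
    - rewrite (upow_inverse x y m hx hy hxy). apply Rle_refl.
    - apply uninorm_monotone_l; auto; lra. }
  assert (hmul : U s e <= U s (U t (upow U e y m)))
    by (apply uninorm_monotone_r; auto using uninorm_closed, uninorm_neutral_in_I).
  rewrite uninorm_neutral_r, uninorm_assoc, (uninorm_comm _ (upow U e y m)),
    (upow_fixpoint y _ m hy hw (outer_fixpoint_inverse _ hw (or_introl hwa)))
    in hmul by auto.
  lra.
Qed.

Lemma between_lims_mul_lt s t : a < s < d -> a < t < d -> U s t < d.
Proof.
  intros hs ht. pose proof (between_lims_in_I s hs) as hsI.
  pose proof (between_lims_in_I t ht) as htI.
  pose proof (uninorm_closed s t hsI htI) as hw.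
  destruct (Rle_lt_dec d (U s t)) as [hdw|]; [exfalso|assumption].
  destruct (is_lim_seq_ex_gt _ _ _ Hd (proj2 ht)) as [m hm].
  pose proof (upow_in_I x m hx) as hxm. pose proof (upow_in_I y m hy) as hym.
  assert (hle_e : U t (upow U e x m) <= e).
  { apply Rle_trans with (U (upow U e y m) (upow U e x m)).
    - apply uninorm_monotone_l; auto; lra.
    - rewrite uninorm_comm, (upow_inverse x y m hx hy hxy) by auto. apply Rle_refl. }
  assert (hmul : U s (U t (upow U e x m)) <= U s e)
    by (apply uninorm_monotone_r; auto using uninorm_closed, uninorm_neutral_in_I).
  rewrite uninorm_neutral_r, uninorm_assoc, (uninorm_comm _ (upow U e x m)),
    (upow_fixpoint x _ m hx hw (Hfix _ hw (or_intror hdw)))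
    in hmul by auto.
  lra.
Qed.

Lemma outer_mul_outer s t :
  inI s -> (s <= a \/ d <= s) -> inI t -> (t <= a \/ d <= t) ->
  U s t <= a \/ d <= U s t.
Proof.
  intros hs hso ht hto. pose proof (uninorm_closed s t hs ht) as hw.
  assert (hxw : U x (U s t) = U s t)
    by (rewrite uninorm_assoc, (Hfix s hs hso) by auto; reflexivity).
  destruct (Rle_lt_dec (U s t) e) as [hwe|hew].
  - left. apply (is_lim_seq_ge_lb _ _ _ Ha). intros n.
    now apply (fixpoint_le_upow x).
  - right. apply (is_lim_seq_le_ub _ _ _ Hd). intros n.
    apply (upow_le_fixpoint y); auto; [|lra].
    now apply (uninorm_inverse_fixpoint x).
Qed.

End OrdinalSum.

End Uninorm.

Theorem mainTheorem11 (U : R -> R -> R) (e x y a d : R) :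
  is_uninorm U e -> disjunctive U ->
  0 < e < 1 ->
  inI x -> x < e ->
  cont_on_I (U x) ->
  (forall z, inI z -> exists t, inI t /\ U x t = z) ->
  inI y -> U x y = e ->
  is_lim_seq (upow U e x) a ->
  is_lim_seq (upow U e y) d ->
  (forall t, inI t -> (t <= a \/ d <= t) -> U x t = t) ->
  (forall s t, a < s < d -> a < t < d -> a < U s t < d) /\
  (forall s t, inI s -> (s <= a \/ d <= s) -> inI t -> (t <= a \/ d <= t) ->
      U s t <= a \/ d <= U s t) /\
  (forall s t, a < s < d -> inI t -> (t <= a \/ d <= t) -> U s t = t).
Proof.
  intros HU _ _ hx _ _ _ hy hxy Ha Hd Hfix.
  split; [|split].
  - intros s t hs ht. split.
    + now apply (between_lims_mul_gt U e HU x y a d).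
    + now apply (between_lims_mul_lt U e HU x y a d).
  - now apply (outer_mul_outer U e HU x y a d).
  - now apply (between_lims_acts_trivially U e HU x y a d).
Qed.
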